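(* Let $\Delta\ge3$. For every graph $G$ with maximum degree at most $\Delta$, the total Thue choice number of $G$ is at most $17.9856\,\Delta^2$; that is, for every assignment $L$ of a list $L(x)$ of colours to each $x\in V(G)\cup E(G)$ with $|L(x)|\ge 17.9856\,\Delta^2$ for all $x$, there exists a total Thue colouring $\varphi$ of $G$ with $\varphi(x)\in L(x)$ for all $x\in V(G)\cup E(G)$.
   Context: Graphs are finite and simple. A sequence is nonrepetitive if no block of consecutive terms has the form $r_1\dots r_nr_1\dots r_n$ with $n\ge1$. A (strong) total Thue colouring of $G$ is a colouring of $V(G)\cup E(G)$ such that for every path $v_1,e_1,v_2,\dots,e_{k-1},v_k$ in $G$ the sequence of colours of $v_1,e_1,\dots,v_k$ is nonrepetitive, the sequence of colours of $v_1,\dots,v_k$ is nonrepetitive, and the sequence of colours of $e_1,\dots,e_{k-1}$ is nonrepetitive. $G$ is nonrepetitively total $l$-choosable if for every list assignment $L:V(G)\cup E(G)\to 2^{\mathbb N}$ with all lists of size at least $l$ there is a total Thue colouring choosing each colour from the associated list; the total Thue choice number is the minimum such $l$. *)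

From mathcomp Require Import all_boot.
Set Implicit Arguments. Unset Strict Implicit. Unset Printing Implicit Defensive.

Definition nonrepetitive (s : seq nat) : Prop :=
  forall i n : nat, 0 < n -> i + n + n <= size s ->
    take n (drop i s) <> take n (drop (i + n) s).

Definition simple_graph (T : finType) (adj : rel T) : Prop :=
  symmetric adj /\ irreflexive adj.

Definition max_degree_le (T : finType) (adj : rel T) (D : nat) : Prop :=
  forall v : T, #|[set u | adj v u]| <= D.

Definition is_gpath (T : finType) (adj : rel T) (p : seq T) : Prop :=
  match p with
  | [::] => False
  | x :: q => path adj x q && uniq p
  end.

(* Edges are represented as 2-element vertex sets [set x; y]. *)
Definition edge_colours (T : finType) (ce : {set T} -> nat) (p : seq T)
  : seq nat :=
  map (fun xy : T * T => ce [set xy.1; xy.2]) (zip p (behead p)).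

Fixpoint total_colours (T : finType) (cv : T -> nat) (ce : {set T} -> nat)
  (p : seq T) : seq nat :=
  match p with
  | [::] => [::]
  | x :: q =>
      match q with
      | [::] => [:: cv x]
      | y :: _ => cv x :: ce [set x; y] :: total_colours cv ce q
      end
  end.

Definition total_thue (T : finType) (adj : rel T)
  (cv : T -> nat) (ce : {set T} -> nat) : Prop :=
  forall p : seq T, is_gpath adj p ->
    [/\ nonrepetitive (total_colours cv ce p),
        nonrepetitive (map cv p)
      & nonrepetitive (edge_colours ce p)].

(* G is nonrepetitively total l-choosable, with lists given as finite
   sets of colours (seq nat; size counted without duplicates). *)
Definition list_total_thue_colourable (T : finType) (adj : rel T)
  (big_enough : nat -> Prop) : Prop :=
  forall (Lv : T -> seq nat) (Le : {set T} -> seq nat),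
    (forall v, big_enough (size (undup (Lv v)))) ->
    (forall x y, adj x y -> big_enough (size (undup (Le [set x; y])))) ->
    exists (cv : T -> nat) (ce : {set T} -> nat),
      [/\ forall v, cv v \in Lv v,
          forall x y, adj x y -> ce [set x; y] \in Le [set x; y]
        & total_thue adj cv ce].

From mathcomp Require Import all_boot zify boolp.
Set Implicit Arguments. Unset Strict Implicit. Unset Printing Implicit Defensive.

(* Counting form of entropy compression (Rosenfeld).  Colour every vertex and
   edge by an index into its list, and let C(S) be the colourings supported on
   S that have no square lying inside S on the vertex, edge or total sequence
   of any path.  Colouring one more element v arbitrarily gives |C(S)| |L|
   colourings; one that is not in C(S + v) contains a square block d through v,
   and is determined by d and by its restriction to S minus the half of d that
   contains v, because the other half carries the same colours.  A block of
   length 2n through v is read off one of at most 16 n D^(2n-1) walks, and by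
   induction removing n - 1 elements divides |C| by at most (4 D^2)^(n-1), so
   at most 32 D |C(S)| colourings fail.  Hence |C(S + v)| >= 4 D^2 |C(S)| as
   soon as |L| >= 4 D^2 + 32 D, which 17 D^2 exceeds for D >= 3. *)

Lemma leq_sum_seq_const (I : eqType) (r : seq I) (F : I -> nat) k :
  (forall x, x \in r -> F x <= k) -> \sum_(x <- r) F x <= size r * k.
Proof.
elim: r => [|x r IH] Fk; first by rewrite big_nil.
rewrite big_cons mulSn leq_add ?Fk ?mem_head //.
by apply: IH => y yr; apply: Fk; rewrite inE yr orbT.
Qed.

Lemma size_flatten_map_le (I : eqType) (U : Type) (s : seq I) (f : I -> seq U) k :
  (forall x, x \in s -> size (f x) <= k) -> size (flatten (map f s)) <= size s * k.
Proof.
by move=> fk; rewrite size_flatten /shape -map_comp sumnE big_map leq_sum_seq_const.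
Qed.

Lemma cons2_subseq (U : eqType) (x : U) s1 s2 : subseq (x :: s1) (x :: s2) = subseq s1 s2.
Proof. by rewrite /= eqxx. Qed.

Lemma size_take_drop (U : Type) (s : seq U) i k :
  i + k <= size s -> size (take k (drop i s)) = k.
Proof. by move=> iks; rewrite size_takel // size_drop; lia. Qed.

Lemma leq_card_bigcup_seq (I : Type) (U : finType) (r : seq I) (A : I -> {set U}) :
  #|\bigcup_(i <- r) A i| <= \sum_(i <- r) #|A i|.
Proof.
elim: r => [|i r IH]; first by rewrite !big_nil cards0.
by rewrite !big_cons; apply: leq_trans (leq_card_setU _ _) _; rewrite leq_add2l.
Qed.

Lemma mem_bigcup_seq (I : eqType) (U : finType) (r : seq I) (A : I -> {set U}) i x :
  i \in r -> x \in A i -> x \in \bigcup_(j <- r) A j.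
Proof.
elim: r => [|j r IH] //; rewrite inE big_cons in_setU => /orP [/eqP <- -> //|/IH Ax /Ax ->].
by rewrite orbT.
Qed.

Lemma leq_mul_divnM a b G : 0 < a -> a * (G %/ (b * a)) <= G %/ b.
Proof.
move=> a_gt0; case: b => [|b]; first by rewrite mul0n divn0 muln0.
rewrite leq_divRL // mulnC mulnA.
by apply: leq_trans (leq_divM G (b.+1 * a)); rewrite mulnC.
Qed.

Lemma sum_divn_exp2_le N G : \sum_(m <- iota 0 N) G %/ 2 ^ m <= G.*2.
Proof.
elim: N G => [|N IH] G; first by rewrite big_nil.
rewrite -[N.+1]add1n iotaD big_cat big_seq1 divn1 (iotaDl 1 0) big_map.
under eq_bigr => j _ do rewrite add1n expnS divnMA.
apply: leq_trans (leq_add (leqnn G) (IH (G %/ 2))) _.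
by rewrite -!addnn leq_add2l addnn -muln2 leq_divM.
Qed.

(** * Entropy compression *)

Section Compression.
Variables (X : finType) (k : nat) (colour : X -> 'I_k.+1 -> nat).
Hypothesis colour_inj : forall x, injective (colour x).
Variable block : seq X -> Prop.
Hypothesis block_uniq : forall d, block d -> uniq d.
Hypothesis block_size : forall d, block d -> exists2 n, 0 < n & size d = n.*2.
Variables (D : nat) (cands : X -> nat -> seq (seq X)).
Hypothesis cands_cover : forall v d n, block d -> v \in d -> size d = n.*2 -> d \in cands v n.
Hypothesis size_cands : forall v n, size (cands v n.+1) <= 16 * (n.+1 * D ^ n.*2.+1).
Hypothesis D_gt0 : 0 < D.
Hypothesis k_large : 4 * D ^ 2 + 32 * D <= k.+1.

Local Notation colouring := {ffun X -> 'I_k.+1}.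
Local Notation gamma := (4 * D ^ 2).

Definition fcolour (f : colouring) x := colour x (f x).

Definition square (f : colouring) (d : seq X) :=
  map (fcolour f) (take (size d)./2 d) == map (fcolour f) (drop (size d)./2 d).

Definition square_free_on (S : {set X}) (f : colouring) :=
  forall d, block d -> {subset d <= S} -> ~~ square f d.

Definition admissible (S : {set X}) : {set colouring} :=
  [set f : colouring | [forall x, (x \notin S) ==> (f x == ord0)] && `[< square_free_on S f >]].

Lemma admissibleP (S : {set X}) (f : colouring) :
  reflect ((forall x, x \notin S -> f x = ord0) /\ square_free_on S f) (f \in admissible S).
Proof.
rewrite inE; apply: (iffP andP) => [[/forallP f0 /asboolP sf]|[f0 sf]]; split => //.
- by move=> x xS; apply/eqP; move: (f0 x); rewrite xS.
- by apply/forallP => x; apply/implyP => /f0 ->.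
- exact/asboolP.
Qed.

Lemma eq_square (f g : colouring) d : {in d, forall x, f x = g x} -> square f d = square g d.
Proof.
move=> fg; rewrite /square.
have eq_on t : {subset t <= d} -> map (fcolour f) t = map (fcolour g) t.
  by move=> td; apply/eq_in_map => x /td xd; rewrite /fcolour fg.
by rewrite !eq_on // => x; [apply: mem_drop | apply: mem_take].
Qed.

Lemma square_free_on_sub (A B : {set X}) (f g : colouring) :
  A \subset B -> {in A, forall x, g x = f x} -> square_free_on B f -> square_free_on A g.
Proof.
move=> AB gf sf d bd dA; rewrite (@eq_square _ f) => [|x /dA]; last exact: gf.
by apply: sf bd _ => x /dA; apply: (subsetP AB).
Qed.

Lemma card_admissible0 : #|admissible set0| = 1.
Proof.
apply/eqP/cards1P; exists [ffun => ord0]; apply/setP => f; rewrite inE.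
apply/admissibleP/eqP => [[f0 _]|->]; first by apply/ffunP => x; rewrite ffunE f0 ?inE.
split=> [x _|d bd d0]; first by rewrite ffunE.
have [n n_gt0 sd] := block_size bd.
case: d sd d0 {bd} => [sd _|x d _ /(_ x (mem_head _ _))]; last by rewrite inE.
by move: n_gt0; rewrite -double_gt0 -sd.
Qed.

Definition grows (S : {set X}) :=
  forall u, u \notin S -> gamma * #|admissible S| <= #|admissible (u |: S)|.

Lemma admissible_chain m (A B : {set X}) :
  A \subset B -> #|B :\: A| = m -> (forall C : {set X}, #|C| < #|B| -> grows C) ->
  gamma ^ m * #|admissible A| <= #|admissible B|.
Proof.
elim: m A => [|m IH] A AB cardBA grows_lt.
  have /eqP : B :\: A = set0 by apply: cards0_eq.
  rewrite setD_eq0 => BA.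
  have -> : A = B by apply/eqP; rewrite eqEsubset AB BA.
  by rewrite expn0 mul1n.
have /card_gt0P [u] : 0 < #|B :\: A| by rewrite cardBA.
rewrite inE => /andP [uA uB].
have uAB : u |: A \subset B by rewrite subUset sub1set uB AB.
have cardBuA : #|B :\: (u |: A)| = m.
  have -> : B :\: (u |: A) = (B :\: A) :\ u by rewrite setDDl setUC.
  by move: cardBA; rewrite (cardsD1 u (B :\: A)) inE uA uB => [[]].
have AltB : #|A| < #|B|.
  by apply: proper_card; rewrite properEneq AB andbT; apply: contraNneq uA => ->.
rewrite expnS -mulnA; apply: leq_trans (IH _ uAB cardBuA grows_lt).
by rewrite mulnCA leq_mul2l grows_lt ?orbT.
Qed.

Definition half_of (v : X) (d : seq X) :=
  let h := (size d)./2 in if v \in take h d then take h d else drop h d.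

Definition other_half (v : X) (d : seq X) :=
  let h := (size d)./2 in if v \in take h d then drop h d else take h d.

Definition partner (v : X) (d : seq X) (x : X) :=
  nth x (other_half v d) (index x (half_of v d)).

Lemma mem_half_of v d : v \in d -> v \in half_of v d.
Proof.
rewrite /half_of; case: ifP => // /negbT vt.
by rewrite -{1}(cat_take_drop (size d)./2 d) mem_cat (negbTE vt).
Qed.

Lemma half_of_sub v d : {subset half_of v d <= d}.
Proof. by rewrite /half_of => x; case: ifP => _; [apply: mem_take | apply: mem_drop]. Qed.

Lemma perm_halves v d : perm_eq (half_of v d ++ other_half v d) d.
Proof.
rewrite /half_of /other_half; case: ifP => _; first by rewrite cat_take_drop.
by rewrite perm_catC cat_take_drop.
Qed.

Lemma size_halves v d n :
  size d = n.*2 -> size (half_of v d) = n /\ size (other_half v d) = n.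
Proof.
move=> sd; rewrite /half_of /other_half sd doubleK.
have st : size (take n d) = n by rewrite size_takel // sd -addnn leq_addr.
have sr : size (drop n d) = n by rewrite size_drop sd -addnn addnK.
by case: ifP.
Qed.

Lemma partner_spec (f : colouring) v d n x :
  uniq d -> size d = n.*2 -> square f d -> x \in half_of v d ->
  [/\ partner v d x \in other_half v d, partner v d x \notin half_of v d
    & fcolour f (partner v d x) = fcolour f x].
Proof.
move=> ud sd sq xh; have [sh so] := size_halves v sd.
have map_halves : map (fcolour f) (half_of v d) = map (fcolour f) (other_half v d).
  by move: sq; rewrite /square /half_of /other_half => /eqP; case: ifP.
have ix : index x (half_of v d) < size (other_half v d) by rewrite so -sh index_mem.
have po : partner v d x \in other_half v d by apply: mem_nth.
split=> //.
  have : uniq (half_of v d ++ other_half v d) by rewrite (perm_uniq (perm_halves v d)).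
  by rewrite cat_uniq => /and3P [_ /hasPn /(_ _ po)].
rewrite /partner -(nth_map x 0) // -map_halves (nth_map x 0) ?nth_index //.
by rewrite sh -so.
Qed.

Definition decode (x : X) (c : nat) : 'I_k.+1 := odflt ord0 [pick i | colour x i == c].

Lemma decodeK x i : decode x (colour x i) = i.
Proof. by rewrite /decode; case: pickP => [j /eqP /colour_inj //|/(_ i)]; rewrite eqxx. Qed.

(* The half of a square block that contains [v] is recovered from the other
   half, which repeats its colours. *)
Definition rebuild v d (g : colouring) : colouring :=
  [ffun x => if x \in half_of v d then decode x (fcolour g (partner v d x)) else g x].

Definition restrict (A : {set X}) (f : colouring) : colouring :=
  [ffun x => if x \in A then f x else ord0].

Definition cut (S : {set X}) v d := S :\: [set x in half_of v d].

Lemma rebuild_restrict v d n (S : {set X}) (f : colouring) :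
  uniq d -> size d = n.*2 -> square f d -> {subset d <= S} ->
  (forall x, x \notin S -> f x = ord0) -> rebuild v d (restrict (cut S v d) f) = f.
Proof.
move=> ud sd sq dS f0; apply/ffunP => x; rewrite ffunE.
case: ifP => xh.
  have [po pnh pc] := partner_spec ud sd sq xh.
  have pd : partner v d x \in d.
    by rewrite -(perm_mem (perm_halves v d)) mem_cat po orbT.
  by rewrite [fcolour _ _]/fcolour ffunE !inE pnh dS // -/(fcolour f _) pc decodeK.
by rewrite ffunE !inE xh /=; case: ifP => // /negbT /f0.
Qed.

Lemma cut_sub (S : {set X}) v d : v \in d -> cut (v |: S) v d \subset S.
Proof.
move=> vd; apply/subsetP => x; rewrite !inE => /andP [xh /orP [/eqP xv|] //].
by move: xh; rewrite xv mem_half_of.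
Qed.

Lemma card_cut (S : {set X}) v d n : v \notin S -> uniq d -> size d = n.*2 -> v \in d ->
  {subset d <= v |: S} -> #|S :\: cut (v |: S) v d| = n.-1.
Proof.
move=> vS ud sd vd dS.
have -> : S :\: cut (v |: S) v d = [set x in half_of v d] :\ v.
  apply/setP => x; rewrite !inE; case xh: (x \in half_of v d) => /=.
    have := dS x (half_of_sub xh); rewrite !inE andbT.
    by case: eqP => [->|_ /= ->]; rewrite ?(negbTE vS).
  by case: (x \in S); rewrite ?orbT ?andbF.
have uh : uniq (half_of v d).
  by have := perm_uniq (perm_halves v d); rewrite ud cat_uniq => /and3P [].
have := cardsD1 v [set x in half_of v d].
rewrite inE mem_half_of // cardsE (card_uniqP uh); have [-> _] := size_halves v sd.
by move=> ->.
Qed.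

Definition extend v (g : colouring) (c : 'I_k.+1) : colouring :=
  [ffun x => if x == v then c else g x].

Definition extensions (S : {set X}) v : {set colouring} :=
  [set extend v p.1 p.2 | p in setX (admissible S) [set: 'I_k.+1]].

Lemma card_extensions (S : {set X}) v :
  v \notin S -> #|extensions S v| = #|admissible S| * k.+1.
Proof.
move=> vS; rewrite card_in_imset ?cardsX ?cardsT ?card_ord //.
move=> [g1 c1] [g2 c2]; rewrite !in_setX /=.
move=> /andP [/admissibleP [g10 _] _] /andP [/admissibleP [g20 _] _] e12.
have := congr1 (fun f : colouring => f v) e12; rewrite !ffunE eqxx => ->.
congr pair; apply/ffunP => x.
have := congr1 (fun f : colouring => f x) e12; rewrite !ffunE.
by case: eqP => [->|] //; rewrite g10 ?g20.
Qed.

Definition fits (S : {set X}) v n (d : seq X) :=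
  [&& uniq d, v \in d, all (mem S) d & size d == n.*2].

Definition cands_in (S : {set X}) v :=
  flatten [seq [seq d <- cands v n | fits S v n d] | n <- iota 1 #|X|].

Lemma block_in_cands_in (S : {set X}) v d :
  block d -> v \in d -> {subset d <= S} -> d \in cands_in S v.
Proof.
move=> bd vd dS; have [n n_gt0 sd] := block_size bd.
apply/flattenP; exists [seq d <- cands v n | fits S v n d].
  apply: map_f; rewrite mem_iota n_gt0 add1n ltnS.
  have := max_card (mem d); rewrite (card_uniqP (block_uniq bd)) sd -addnn; lia.
have fd : fits S v n d.
  by apply/and4P; split; [exact: block_uniq | by [] | apply/allP | rewrite sd].
by rewrite mem_filter fd cands_cover.
Qed.

Lemma extension_rebuilt (S : {set X}) v f :
  v \notin S -> f \in extensions S v -> f \notin admissible (v |: S) ->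
  f \in \bigcup_(d <- cands_in (v |: S) v) rebuild v d @: admissible (cut (v |: S) v d).
Proof.
move=> vS /imsetP [[g c]]; rewrite in_setX => /andP [/admissibleP [g0 gsf] _] -> {f}.
set f := extend v g c.
have fg x : x != v -> f x = g x by move/negbTE => xv; rewrite ffunE xv.
have f0 x : x \notin v |: S -> f x = ord0.
  by rewrite !inE negb_or => /andP [/fg -> /g0].
apply: contraNT => not_rebuilt; apply/admissibleP; split => // d bd dS.
apply/negP => sq; have [n _ sd] := block_size bd.
have [vd|vNd] := boolP (v \in d); last first.
  have dS' : {subset d <= S}.
    move=> x xd; move: (dS x xd); rewrite !inE; case: eqP => // xv.
    by move: xd; rewrite xv (negbTE vNd).
  apply: (negP (gsf d bd dS')); rewrite -(@eq_square f) // => x xd.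
  by apply: fg; apply: contraNneq vNd => <-.
apply: (negP not_rebuilt); apply: (mem_bigcup_seq (block_in_cands_in bd vd dS)).
apply/imsetP; exists (restrict (cut (v |: S) v d) f); last first.
  by rewrite (rebuild_restrict v (block_uniq bd) sd sq dS f0).
apply/admissibleP; split => [x|]; first by rewrite ffunE => /negbTE ->.
apply: (square_free_on_sub (cut_sub S vd) _ gsf) => x xcut.
rewrite ffunE xcut fg //; apply: contraTneq xcut => ->.
by rewrite !inE mem_half_of.
Qed.

Lemma card_bad_extensions (S : {set X}) v : v \notin S ->
  #|extensions S v :\: admissible (v |: S)| <=
  \sum_(d <- cands_in (v |: S) v) #|admissible (cut (v |: S) v d)|.
Proof.
move=> vS.
have bad_sub : extensions S v :\: admissible (v |: S) \subset
    \bigcup_(d <- cands_in (v |: S) v) rebuild v d @: admissible (cut (v |: S) v d).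
  by apply/subsetP => f; rewrite inE => /andP [fbad fext]; apply: extension_rebuilt.
apply: leq_trans (subset_leq_card bad_sub) (leq_trans (leq_card_bigcup_seq _ _) _).
by apply: leq_sum => d _; apply: leq_imset_card.
Qed.

Lemma weight_le G m : m.+1 * D ^ m.*2.+1 * (G %/ gamma ^ m) <= D * (G %/ 2 ^ m).
Proof.
set Y := (D ^ 2) ^ m.
have Y_gt0 : 0 < Y by rewrite !expn_gt0 D_gt0.
have -> : m.+1 * D ^ m.*2.+1 * (G %/ gamma ^ m) = D * (m.+1 * (Y * (G %/ (4 ^ m * Y)))).
  by rewrite expnS -mul2n expnM expnMn -/Y; lia.
rewrite leq_mul2l; apply/orP; right.
apply: leq_trans (leq_mul (leqnn _) (leq_mul_divnM _ _ Y_gt0)) _.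
have -> : 4 ^ m = 2 ^ m * 2 ^ m by rewrite -expnMn.
apply: leq_trans (leq_mul_divnM _ _ (expn_gt0 2 m)).
by rewrite leq_mul2r ltn_expl ?orbT.
Qed.

Lemma sum_cut_le (S : {set X}) v :
  v \notin S -> (forall C : {set X}, #|C| < #|S| -> grows C) ->
  \sum_(d <- cands_in (v |: S) v) #|admissible (cut (v |: S) v d)| <= 32 * D * #|admissible S|.
Proof.
move=> vS grows_lt; set G := #|admissible S|; rewrite /cands_in.
have -> : iota 1 #|X| = map (addn 1) (iota 0 #|X|) by rewrite -iotaDl.
rewrite big_flatten /= !big_map.
apply: leq_trans (_ : \sum_(m <- iota 0 #|X|) D * (16 * (G %/ 2 ^ m)) <= _); last first.
  rewrite -!big_distrr /= [32 * D]mulnC -mulnA leq_mul2l.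
  by rewrite -[32]/(16 * 2) -mulnA leq_mul2l mul2n sum_divn_exp2_le !orbT.
apply: leq_sum => m _; rewrite add1n big_filter big_mkcond /=.
apply: leq_trans (_ : \sum_(d <- cands v m.+1) G %/ gamma ^ m <= _).
  apply: leq_sum => d _; case: ifP => // /and4P [ud vd /allP dS /eqP sd].
  rewrite leq_divRL ?expn_gt0 ?muln_gt0 ?expn_gt0 ?D_gt0 // mulnC.
  exact: admissible_chain (cut_sub S vd) (card_cut vS ud sd vd dS) grows_lt.
apply: leq_trans (leq_sum_seq_const (k := G %/ gamma ^ m) _) _ => // .
apply: leq_trans (leq_mul (size_cands v m) (leqnn _)) _.
by rewrite -mulnA [D * _]mulnCA leq_mul2l weight_le orbT.
Qed.

Lemma grows_step (S : {set X}) : (forall C : {set X}, #|C| < #|S| -> grows C) -> grows S.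
Proof.
move=> grows_lt v vS; set G := #|admissible S|.
have split_ext : #|extensions S v| <=
    #|admissible (v |: S)| + #|extensions S v :\: admissible (v |: S)|.
  rewrite -(cardsID (admissible (v |: S)) (extensions S v)) leq_add2r.
  by apply: subset_leq_card; apply: subsetIr.
have := leq_trans split_ext (leq_add (leqnn _) (leq_trans (card_bad_extensions vS) (sum_cut_le vS grows_lt))).
rewrite card_extensions // -/G.
have := leq_mul (leqnn G) k_large; lia.
Qed.

Lemma grows_all (S : {set X}) : grows S.
Proof.
suff grows_lt m (C : {set X}) : #|C| < m -> grows C by apply: (grows_lt #|S|.+1).
elim: m C => [|m IH] C // Cm; apply: grows_step => B BC; apply: IH; lia.
Qed.

Theorem exists_square_free_colouring :
  exists f : colouring, forall d, block d -> ~~ square f d.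
Proof.
have : 0 < #|admissible setT|.
  have := admissible_chain (sub0set setT) (erefl _) (fun C _ => @grows_all C).
  rewrite card_admissible0 muln1; apply: leq_trans.
  by rewrite expn_gt0 muln_gt0 expn_gt0 D_gt0.
case/card_gt0P => f /admissibleP [_ sf].
by exists f => d bd; apply: sf d bd (fun x _ => in_setT x).
Qed.
End Compression.

(** * Sequences of a path and the walks through an element *)

Section Trails.
Variable T : finType.
Local Notation X := (T + {set T})%type.

Definition vertex_seq (p : seq T) : seq X := map inl p.

Definition edge_seq (p : seq T) : seq X :=
  [seq inr [set xy.1; xy.2] | xy <- zip p (behead p)].

Lemma edge_seq_cons2 x y q : edge_seq [:: x, y & q] = inr [set x; y] :: edge_seq (y :: q).
Proof. by []. Qed.

Arguments edge_seq : simpl never.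

Fixpoint total_seq (p : seq T) : seq X :=
  if p is x :: q then
    if q is y :: _ then inl x :: inr [set x; y] :: total_seq q else [:: inl x]
  else [::].

Lemma vertex_colours_map (c : X -> nat) p :
  map (fun a => c (inl a)) p = map c (vertex_seq p).
Proof. by rewrite -map_comp. Qed.

Lemma edge_colours_map (c : X -> nat) p :
  edge_colours (fun e => c (inr e)) p = map c (edge_seq p).
Proof. by rewrite /edge_colours -map_comp. Qed.

Lemma total_colours_map (c : X -> nat) p :
  total_colours (fun a => c (inl a)) (fun e => c (inr e)) p = map c (total_seq p).
Proof. by elim: p => [|x [|y q] IH] //=; congr [:: _, _ & _]. Qed.

Lemma size_vertex_seq p : size (vertex_seq p) = size p.
Proof. exact: size_map. Qed.

Lemma size_edge_seq p : size (edge_seq p) = (size p).-1.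
Proof. by rewrite size_map size_zip size_behead; case: p => //= x p; lia. Qed.

Lemma size_total_seq p : size (total_seq p) = (size p).*2.-1.
Proof. by elim: p => [|x [|y q] IH] //=; rewrite IH. Qed.

Lemma drop_edge_seq i p : drop i (edge_seq p) = edge_seq (drop i p).
Proof. by elim: p i => [|x [|y q] IH] [|i] //; rewrite edge_seq_cons2 /= IH. Qed.

Lemma take_edge_seq m p : take m (edge_seq p) = edge_seq (take m.+1 p).
Proof. by elim: p m => [|x [|y q] IH] [|m] //; rewrite edge_seq_cons2 /= IH. Qed.

Lemma drop_total_seq j p : drop j.*2 (total_seq p) = total_seq (drop j p).
Proof. by elim: p j => [|x [|y q] IH] [|j] //=; rewrite IH. Qed.

Lemma take_total_seq n p : take n.*2.+1 (total_seq p) = total_seq (take n.+1 p).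
Proof. by elim: p n => [|x [|y q] IH] [|n] //=; rewrite IH. Qed.

Lemma mem_total_seq_inl u p : (inl u \in total_seq p) = (u \in p).
Proof. by elim: p => [|x [|y q] IH] //=; rewrite !inE // IH inE. Qed.

Lemma total_seq_inrP e p : inr e \in total_seq p ->
  exists q1 a b q2, p = q1 ++ [:: a, b & q2] /\ e = [set a; b].
Proof.
elim: p => [|x [|y q] IH] //=; rewrite !inE //= => /orP [/eqP [->]|].
  by exists [::], x, y, q.
by move/IH => [q1 [a [b [q2 [-> ->]]]]]; exists (x :: q1), a, b, q2.
Qed.

Lemma subseq_vertex_total p : subseq (vertex_seq p) (total_seq p).
Proof.
elim: p => [|x [|y q] IH]; rewrite ?sub1seq ?mem_head //.
change (subseq (inl x :: vertex_seq (y :: q)) (inl x :: inr [set x; y] :: total_seq (y :: q))).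
by rewrite cons2_subseq (subseq_trans IH (subseq_cons _ _)).
Qed.

Lemma subseq_edge_total p : subseq (edge_seq p) (total_seq p).
Proof.
elim: p => [|x [|y q] IH] //; rewrite edge_seq_cons2.
change (subseq (inr [set x; y] :: edge_seq (y :: q)) (inl x :: inr [set x; y] :: total_seq (y :: q))).
by apply: subseq_trans _ (subseq_cons _ (inl x)); rewrite cons2_subseq.
Qed.

Lemma uniq_total_seq p : uniq p -> uniq (total_seq p).
Proof.
elim: p => [|x [|y q] IH] // /andP [xNq uq].
change (uniq (inl x :: inr [set x; y] :: total_seq (y :: q))).
rewrite !cons_uniq in_cons mem_total_seq_inl (negbTE xNq) IH // andbT.
apply/negP => /total_seq_inrP [q1 [a [b [q2 [yq exy]]]]].
have : x \in [set a; b] by rewrite -exy !inE eqxx.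
by rewrite !inE => /orP [] /eqP xab; move: xNq; rewrite yq xab !mem_cat !inE eqxx ?orbT.
Qed.
End Trails.

Section Walks.
Variables (T : finType) (adj : rel T) (D : nat).
Hypothesis adj_sym : symmetric adj.
Hypothesis deg_le : forall v : T, #|[set u | adj v u]| <= D.

Fixpoint walks (m : nat) (a : T) : seq (seq T) :=
  if m is m'.+1 then flatten [seq map (cons a) (walks m' b) | b <- enum [set u | adj a u]]
  else [:: [:: a]].

Lemma size_walks m a : size (walks m a) <= D ^ m.
Proof.
elim: m a => [|m IH] a //=.
apply: leq_trans (size_flatten_map_le (k := D ^ m) _) _ => [b _|].
  by rewrite size_map IH.
by rewrite expnS leq_mul2r -cardE deg_le orbT.
Qed.

Lemma walks_complete a r : path adj a r -> a :: r \in walks (size r) a.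
Proof.
elim: r a => [|b r IH] a /=; first by rewrite inE.
move=> /andP [ab br]; apply/flattenP; exists (map (cons a) (walks (size r) b)).
  by apply: map_f; rewrite mem_enum inE.
by rewrite mem_map ?IH // => ? ? [].
Qed.

Lemma rev_walks_complete q a : sorted adj (rcons q a) -> a :: rev q \in walks (size q) a.
Proof.
move=> qa; rewrite -size_rev; apply: walks_complete.
rewrite -[path _ _ _]/(sorted adj (a :: rev q)) -rev_rcons rev_sorted.
by rewrite (@eq_sorted _ _ adj) // => x y; apply: adj_sym.
Qed.

Lemma size_allpairs_walks (R : Type) (g : seq T -> seq T -> R) i j a b :
  size [seq g x y | x <- walks i a, y <- walks j b] <= D ^ (i + j).
Proof. by rewrite size_allpairs expnD leq_mul ?size_walks. Qed.

Definition walks_via (u : T) (k : nat) : seq (seq T) :=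
  flatten [seq [seq rev x ++ behead y | x <- walks j u, y <- walks (k.-1 - j) u]
          | j <- iota 0 k].

Definition walks_across (a b : T) (k : nat) : seq (seq T) :=
  flatten [seq [seq rev x ++ y | x <- walks j a, y <- walks (k.-2 - j) b]
          | j <- iota 0 k.-1].

(* The four pairs over a two-element set: both orientations and two loops. *)
Definition arcs (e : {set T}) : seq (T * T) :=
  if #|e| == 2 then [seq (a, b) | a <- enum e, b <- enum e] else [::].

Definition walks_through (v : T + {set T}) (k : nat) : seq (seq T) :=
  match v with
  | inl u => walks_via u k
  | inr e => flatten [seq walks_across ab.1 ab.2 k | ab <- arcs e]
  end.

Lemma size_walks_via u k : size (walks_via u k) <= k * D ^ k.-1.
Proof.
apply: leq_trans (size_flatten_map_le (k := D ^ k.-1) _) _; last by rewrite size_iota.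
move=> j; rewrite mem_iota => /andP [_ jk].
by rewrite -[in X in _ <= X](@subnKC j k.-1) ?size_allpairs_walks //; lia.
Qed.

Lemma size_walks_across a b k : size (walks_across a b k) <= k.-1 * D ^ k.-2.
Proof.
apply: leq_trans (size_flatten_map_le (k := D ^ k.-2) _) _; last by rewrite size_iota.
move=> j; rewrite mem_iota => /andP [_ jk].
by rewrite -[in X in _ <= X](@subnKC j k.-2) ?size_allpairs_walks //; lia.
Qed.

Lemma size_walks_through_edge e k :
  size (walks_through (inr e) k) <= 4 * (k.-1 * D ^ k.-2).
Proof.
apply: leq_trans (size_flatten_map_le (k := k.-1 * D ^ k.-2) _) _ => [ab _|].
  exact: size_walks_across.
rewrite leq_mul2r; apply/orP; right; rewrite /arcs; case: eqP => // e2.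
by rewrite size_allpairs -cardE e2.
Qed.
End Walks.

Section PathBlocks.
Variables (T : finType) (adj : rel T) (D : nat).
Hypothesis adj_sym : symmetric adj.
Hypothesis adj_irr : irreflexive adj.
Hypothesis deg_le : forall v : T, #|[set u | adj v u]| <= D.
Local Notation X := (T + {set T})%type.

Lemma mem_walks_through (v : X) q :
  sorted adj q -> v \in total_seq q -> q \in walks_through adj v (size q).
Proof.
case: v => [u|e] sq.
  rewrite mem_total_seq_inl => uq; move: sq; case/splitPr: uq => q1 q2.
  rewrite sorted_cat_cons => /andP [s1 s2].
  apply/flattenP; exists [seq rev x ++ behead y | x <- walks adj (size q1) u, y <- walks adj (size q2) u].
    apply/mapP; exists (size q1); first by rewrite mem_iota size_cat /=; lia.
    by rewrite size_cat /=; have -> : (size q1 + (size q2).+1).-1 - size q1 = size q2 by lia.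
  have -> : q1 ++ u :: q2 = rev (u :: rev q1) ++ behead (u :: q2) by rewrite rev_cons revK cat_rcons.
  by apply: allpairs_f; [apply: rev_walks_complete | apply: walks_complete].
move/total_seq_inrP => [q1 [a [b [q2 [qe ->]]]]].
move: sq; rewrite qe sorted_cat_cons /= => /andP [s1 /andP [ab s2]].
have a_neq_b : a != b by apply: contraTneq ab => ->; rewrite adj_irr.
apply/flattenP; exists (walks_across adj a b (size (q1 ++ [:: a, b & q2]))).
  apply: (map_f _ (x := (a, b))); rewrite /arcs cards2 a_neq_b.
  by apply: (allpairs_f pair); rewrite mem_enum !inE eqxx ?orbT.
apply/flattenP; exists [seq rev x ++ y | x <- walks adj (size q1) a, y <- walks adj (size q2) b].
  apply/mapP; exists (size q1); first by rewrite mem_iota size_cat /=; lia.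
  by rewrite size_cat /=; have -> : (size q1 + (size q2).+2).-2 - size q1 = size q2 by lia.
have -> : q1 ++ [:: a, b & q2] = rev (a :: rev q1) ++ b :: q2 by rewrite rev_cons revK cat_rcons.
by apply: allpairs_f; [apply: rev_walks_complete | apply: walks_complete].
Qed.

Definition trails (p : seq T) : seq (seq X) := [:: vertex_seq p; edge_seq p; total_seq p].

Definition path_block (d : seq X) : Prop :=
  exists p s i n, [/\ is_gpath adj p, s \in trails p, 0 < n, i + n.*2 <= size s
                    & d = take n.*2 (drop i s)].

Lemma is_gpathP p : is_gpath adj p -> sorted adj p /\ uniq p.
Proof. by case: p => //= x q /andP []. Qed.

Lemma uniq_trails p s : uniq p -> s \in trails p -> uniq s.
Proof.
move=> /uniq_total_seq up; rewrite !inE => /or3P [] /eqP -> //.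
  exact: subseq_uniq (subseq_vertex_total p) up.
exact: subseq_uniq (subseq_edge_total p) up.
Qed.

Lemma path_block_uniq d : path_block d -> uniq d.
Proof.
move=> [p [s [i [n [/is_gpathP [_ up] sp _ _ ->]]]]].
by rewrite take_uniq // drop_uniq // (uniq_trails up sp).
Qed.

Lemma path_block_size d : path_block d -> exists2 n, 0 < n & size d = n.*2.
Proof. by move=> [p [s [i [n [_ _ n_gt0 ins ->]]]]]; exists n; rewrite ?size_take_drop. Qed.

Definition path_cands (v : X) (n : nat) : seq (seq X) :=
  [seq take n.*2 (drop b (total_seq q)) | b <- [:: 0; 1], q <- walks_through adj v n.+1]
  ++ if v is inl _ then [seq vertex_seq q | q <- walks_through adj v n.*2]
     else [seq edge_seq q | q <- walks_through adj v n.*2.+1].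

Lemma vertex_block_in_cands v p i n :
  sorted adj p -> i + n.*2 <= size p -> v \in take n.*2 (drop i (vertex_seq p)) ->
  take n.*2 (drop i (vertex_seq p)) \in path_cands v n.
Proof.
rewrite -map_drop -map_take => sp ins; set q := take n.*2 (drop i p) => vq.
case: v vq => [u|e] vq; last by case/mapP: vq.
rewrite mem_cat map_f ?orbT // -(size_take_drop ins).
apply: mem_walks_through; first by rewrite take_sorted ?drop_sorted.
by have /(_ _ vq) := mem_subseq (subseq_vertex_total q).
Qed.

Lemma edge_block_in_cands v p i n :
  sorted adj p -> 0 < n -> i + n.*2 <= size (edge_seq p) -> v \in take n.*2 (drop i (edge_seq p)) ->
  take n.*2 (drop i (edge_seq p)) \in path_cands v n.
Proof.
rewrite size_edge_seq drop_edge_seq take_edge_seq => sp n_gt0 ins.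
set q := take n.*2.+1 (drop i p) => vq.
case: v vq => [u|e] vq; first by case/mapP: vq.
rewrite mem_cat map_f ?orbT // -(@size_take_drop _ p i n.*2.+1); last by move: ins; rewrite -addnn; lia.
apply: mem_walks_through; first by rewrite take_sorted ?drop_sorted.
by have /(_ _ vq) := mem_subseq (subseq_edge_total q).
Qed.

Lemma total_block_in_cands v p i n :
  sorted adj p -> 0 < n -> i + n.*2 <= size (total_seq p) -> v \in take n.*2 (drop i (total_seq p)) ->
  take n.*2 (drop i (total_seq p)) \in path_cands v n.
Proof.
rewrite size_total_seq -(odd_double_half i) => sp n_gt0 ins.
set b := odd i; set j := i./2; set q := take n.+1 (drop j p).
have -> : take n.*2 (drop (b + j.*2) (total_seq p)) = take n.*2 (drop b (total_seq q)).
  rewrite -drop_drop drop_total_seq !take_drop -take_total_seq.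
  by rewrite take_takel //; case: (b); rewrite ?addn0 ?addn1.
move=> vq; rewrite mem_cat; apply/orP; left; apply: allpairs_f; first by case: (b).
rewrite -(@size_take_drop _ p j n.+1); last by move: ins; rewrite -!addnn; case: (b) => /=; lia.
by apply: mem_walks_through; [rewrite take_sorted ?drop_sorted | apply: mem_drop (mem_take vq)].
Qed.

Lemma path_cands_cover v d n : path_block d -> v \in d -> size d = n.*2 -> d \in path_cands v n.
Proof.
move=> [p [s [i [m [/is_gpathP [sp _] sP m_gt0 ims ->]]]]] vd.
rewrite size_take_drop // => /double_inj <-.
move: sP ims vd; rewrite !inE => /or3P [] /eqP ->.
- by rewrite size_vertex_seq; apply: vertex_block_in_cands.
- exact: edge_block_in_cands.
- exact: total_block_in_cands.
Qed.

Lemma size_path_cands v n : 0 < D -> size (path_cands v n.+1) <= 16 * (n.+1 * D ^ n.*2.+1).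
Proof.
move=> D_gt0; rewrite size_cat size_allpairs.
have Dn1 : D ^ n.+1 <= D ^ n.*2.+1 by rewrite leq_pexp2l // ltnS -addnn leq_addl.
have Dn : D ^ n <= D ^ n.*2.+1 by rewrite leq_pexp2l // -addnn; lia.
case: v => [u|e] /=; rewrite size_map.
  have := size_walks_via deg_le u n.+2; have := size_walks_via deg_le u n.+1.*2 => /=.
  have := leq_mul (leqnn n.+2) Dn1; rewrite -!addnn; nia.
have := size_walks_through_edge deg_le e n.+2; have := size_walks_through_edge deg_le e n.+1.*2.+1 => /=.
have := leq_mul (leqnn n.+1) Dn; rewrite -!addnn; nia.
Qed.
End PathBlocks.

(** * Colouring from the lists *)

Lemma total_thue_of_square_free (T : finType) (adj : rel T) (c : T + {set T} -> nat) :
  (forall d, path_block adj d -> map c (take (size d)./2 d) != map c (drop (size d)./2 d)) ->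
  total_thue adj (fun a => c (inl a)) (fun e => c (inr e)).
Proof.
move=> sqfree p gp.
have nonrep s : s \in trails p -> nonrepetitive (map c s).
  move=> sp i n n_gt0; rewrite size_map => ins.
  have bd : path_block adj (take n.*2 (drop i s)).
    by exists p, s, i, n; rewrite -addnn addnA.
  have := sqfree _ bd; rewrite size_take_drop ?doubleK; last by rewrite -addnn addnA.
  rewrite -addnn take_takel ?leq_addr // -take_drop drop_drop [n + i]addnC.
  by rewrite -!map_drop -!map_take => /eqP.
rewrite total_colours_map vertex_colours_map edge_colours_map.
by split; apply: nonrep; rewrite !inE eqxx ?orbT.
Qed.

Section Palettes.
Variables (T : finType) (adj : rel T) (l : nat).
Variables (Lv : T -> seq nat) (Le : {set T} -> seq nat).
Hypothesis Lv_big : forall v, l < size (undup (Lv v)).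
Hypothesis Le_big : forall x y, adj x y -> l < size (undup (Le [set x; y])).

(* Non-edges never occur on the sequences of a path; they get a dummy palette. *)
Definition palette (x : T + {set T}) : seq nat :=
  match x with
  | inl a => undup (Lv a)
  | inr e => if [exists a, exists b, adj a b && (e == [set a; b])] then undup (Le e)
             else iota 0 l.+1
  end.

Definition palette_colour (x : T + {set T}) (i : 'I_l.+1) := nth 0 (palette x) i.

Lemma size_palette x : l < size (palette x).
Proof.
case: x => [a|e] /=; first exact: Lv_big.
case: ifP => [/existsP [a /existsP [b /andP [ab /eqP ->]]]|_]; first exact: Le_big.
by rewrite /= size_iota.
Qed.

Lemma palette_colour_inj x : injective (palette_colour x).
Proof.
have up : uniq (palette x).
  case: x => [a|e] /=; first exact: undup_uniq.
  by case: ifP => _; [exact: undup_uniq | exact: (iota_uniq 0 l.+1)].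
move=> i j /eqP; rewrite /palette_colour nth_uniq ?(leq_trans (ltn_ord _) (size_palette x)) //.
by move/eqP/val_inj.
Qed.

Lemma palette_colour_mem x i : palette_colour x i \in palette x.
Proof. exact: mem_nth (leq_trans (ltn_ord i) (size_palette x)). Qed.

Lemma exists_list_total_thue D :
  symmetric adj -> irreflexive adj -> max_degree_le adj D -> 0 < D ->
  4 * D ^ 2 + 32 * D <= l.+1 ->
  exists (cv : T -> nat) (ce : {set T} -> nat),
    [/\ forall v, cv v \in Lv v,
        forall x y, adj x y -> ce [set x; y] \in Le [set x; y]
      & total_thue adj cv ce].
Proof.
move=> adj_sym adj_irr deg_le D_gt0 l_large.
have [f sqfree] := exists_square_free_colouring palette_colour_inj
  (@path_block_uniq _ adj) (@path_block_size _ adj) (path_cands_cover adj_sym adj_irr)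
  (fun v n => size_path_cands deg_le v n D_gt0) D_gt0 l_large.
set c := fcolour palette_colour f.
exists (fun a => c (inl a)), (fun e => c (inr e)); split.
- by move=> a; rewrite -mem_undup; apply: (palette_colour_mem (inl a)).
- move=> x y xy; have := palette_colour_mem (inr [set x; y]) (f (inr [set x; y])).
  have edge : [exists a, exists b, adj a b && ([set x; y] == [set a; b])].
    by apply/existsP; exists x; apply/existsP; exists y; rewrite xy eqxx.
  by rewrite /= edge mem_undup.
- exact: total_thue_of_square_free.
Qed.
End Palettes.

Theorem theorem20 (D : nat) (hD : 3 <= D) (T : finType) (adj : rel T)
  (hG : simple_graph adj) (hdeg : max_degree_le adj D) :
  list_total_thue_colourable adj
    (fun l : nat => 179856 * D ^ 2 <= 10000 * l).
Proof.
move=> Lv Le Lv_big Le_big; case: hG => adj_sym adj_irr.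
have D_gt0 : 0 < D by lia.
set l := (17 * D ^ 2).-1.
have l_def : l.+1 = 17 * D ^ 2 by rewrite prednK // muln_gt0 expn_gt0 D_gt0.
have big s : 179856 * D ^ 2 <= 10000 * s -> l < s.
  move=> Ls; rewrite -ltnS l_def ltnS -(@leq_pmul2l 10000) //; apply: leq_trans Ls.
  by rewrite mulnA leq_mul2r orbT.
apply: (@exists_list_total_thue _ _ l) adj_sym adj_irr hdeg D_gt0 _.
- by move=> v; apply/big/Lv_big.
- by move=> x y /Le_big/big.
- have : 3 * D <= D ^ 2 by rewrite expnS expn1 leq_mul2r hD orbT.
  rewrite l_def; lia.
Qed.
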